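(* Let $f=\prod_{i=1}^n(y-a_i)\in\overline K[y]$ be reduced ($a_i$ pairwise distinct), of degree $n\ge2$. Let $w=\sum_{i=1}^nw_i\varepsilon_i\in\overline{\mathcal F}$. Then every solution $(u,v)\in\overline{\mathcal E}\times\overline{\mathcal E}$, $u=\sum_iu_i\varepsilon_i$, of $uf'_x+vf'_y=wf$ satisfies $v=\sum_{i=1}^nu_ia'_i\varepsilon_i$ and, for $1\le i\le n$, $$w_i=\Bigl(\sum_{j\ne i}\frac{a'_i-a'_j}{a_i-a_j}\Bigr)u_i-\sum_{j\neq i}\frac{a'_i-a'_j}{a_i-a_j}\,u_j.$$
   Context: $\overline K=\bigcup_{d\ge1}\mathbf C[[x^{1/d}]][1/x]$, $'$ denotes $d/dx$ and $f'_x,f'_y$ partial derivatives (coefficientwise in $x$). $\overline{\mathcal E}$ is the $\overline K$-space of polynomials in $y$ of degree $<n$, with basis $\varepsilon_i=\prod_{j\ne i}(y-a_j)$; $\overline{\mathcal F}=\{\sum u_i\varepsilon_i:\sum u_i=0\}$, the polynomials of degree $<n-1$. *)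

From HB Require Import structures.
From mathcomp Require Import all_boot all_order all_algebra.
Set Implicit Arguments. Unset Strict Implicit. Unset Printing Implicit Defensive.
Import GRing.Theory.
Local Open Scope ring_scope.

(* A derivation on a field K (plays the role of ' = d/dx on \overline K). *)
Definition is_derivation (K : fieldType) (D : K -> K) : Prop :=
  (forall x y, D (x + y) = D x + D y) /\ (forall x y, D (x * y) = D x * y + x * D y).

Definition fpoly (K : fieldType) (n : nat) (a : 'I_n -> K) : {poly K} :=
  \prod_(i < n) ('X - (a i)%:P).

Definition eps (K : fieldType) (n : nat) (a : 'I_n -> K) (i : 'I_n) : {poly K} :=
  \prod_(j < n | j != i) ('X - (a j)%:P).

(* f'_x : the derivation applied coefficientwise *)
Definition dx (K : fieldType) (D : K -> K) (p : {poly K}) : {poly K} := map_poly D p.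

From mathcomp Require Import all_boot all_order all_algebra.
From mathcomp Require Import ring.
Import GRing.Theory.
Local Open Scope ring_scope.
Set Implicit Arguments. Unset Strict Implicit.

(* Evaluate the identity at y = a_k: f and every eps_i with i <> k vanish there, while
   f'_y(a_k) = eps_k(a_k) and f'_x(a_k) = -a'_k eps_k(a_k), so v(a_k) = u_k a'_k eps_k(a_k),
   and since deg v < n this determines v by interpolation at the n points a_k.  Substituting v,
   u f'_x + v f'_y = sum_(i,j) u_i (a'_i - a'_j) eps_i eps_j, and for i <> j one has
   eps_i eps_j = f prod_(l <> i, j) (y - a_l); dividing by f gives w explicitly, and
   evaluating at a_k, where only the products with i = k or j = k survive, yields w_k. *)

Section Derivation.
Variables (R : comNzRingType) (d : R -> R).
Hypotheses (dD : {morph d : x y / x + y}) (dM : forall x y, d (x * y) = d x * y + x * d y).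

Lemma derivation0 : d 0 = 0.
Proof. by apply: (@addrI _ (d 0)); rewrite -dD !addr0. Qed.

Lemma derivationN x : d (- x) = - d x.
Proof. by apply: (@addrI _ (d x)); rewrite -dD !subrr derivation0. Qed.

Lemma derivation1 : d 1 = 0.
Proof.
have := dM 1 1; rewrite !mulr1 mul1r => h.
by apply: (@addrI _ (d 1)); rewrite addr0 -h.
Qed.

Lemma derivation_prod (I : finType) (F : I -> R) (A : {set I}) :
  d (\prod_(j in A) F j) = \sum_(i in A) d (F i) * \prod_(j in A :\ i) F j.
Proof.
elim: {A}_.+1 {-2}A (ltnSn #|A|) => // m IH A hA.
have [->|[i0 Ai0]] := set_0Vmem A; first by rewrite !big_set0 derivation1.
have hA' : (#|A :\ i0| < m)%N by rewrite -ltnS (leq_trans _ hA) // (cardsD1 i0 A) Ai0.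
rewrite (big_setD1 i0 Ai0) /= dM IH // [in RHS](big_setD1 i0 Ai0) /= mulr_sumr.
congr (_ + _); apply: eq_bigr => i; rewrite !inE => /andP[i0i Ai].
have Ai0' : i0 \in A :\ i by rewrite !inE eq_sym i0i.
rewrite (big_setD1 i0 Ai0') /= mulrCA; congr (_ * (_ * _)).
by apply: eq_bigl => j; rewrite !inE; do 2 case: (_ == _).
Qed.

End Derivation.

Section CoefficientwiseDerivation.
Variables (K : fieldType) (D : K -> K).
Hypothesis hD : is_derivation D.

Lemma dxD : {morph dx D : p q / p + q}.
Proof.
case: hD => DD _ p q; apply/polyP => k.
by rewrite coefD !coef_map_id0 ?(derivation0 DD) // coefD DD.
Qed.

Lemma dxM p q : dx D (p * q) = dx D p * q + p * dx D q.
Proof.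
case: hD => DD DM; apply/polyP => k.
rewrite coefD !coefM !coef_map_id0 ?(derivation0 DD) // coefM.
rewrite (big_morph D DD (derivation0 DD)) -big_split /=; apply: eq_bigr => i _.
by rewrite DM !coef_map_id0 ?(derivation0 DD).
Qed.

Lemma dxXsubC c : dx D ('X - c%:P) = - (D c)%:P.
Proof.
case: hD => DD DM; apply/polyP => k.
rewrite coef_map_id0 ?(derivation0 DD) // coefB coefX !coefC coefN coefC.
by case: k => [|[|k]] /=;
  rewrite ?sub0r ?subr0 ?(derivationN DD) ?(derivation1 DM) ?(derivation0 DD) ?oppr0.
Qed.

End CoefficientwiseDerivation.

Section LagrangeBasis.
Variables (K : fieldType) (n : nat) (a : 'I_n -> K).
Hypothesis a_inj : injective a.

Definition eps2 (i j : 'I_n) : {poly K} :=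
  \prod_(k < n | (k != i) && (k != j)) ('X - (a k)%:P).

Lemma fpoly_setE : fpoly a = \prod_(j in [set: 'I_n]) ('X - (a j)%:P).
Proof. by apply: eq_bigl => j; rewrite inE. Qed.

Lemma eps_setE i : eps a i = \prod_(j in [set: 'I_n] :\ i) ('X - (a j)%:P).
Proof. by apply: eq_bigl => j; rewrite !inE andbT. Qed.

Lemma deriv_fpoly : (fpoly a)^`() = \sum_i eps a i.
Proof.
rewrite fpoly_setE (derivation_prod (@derivM _)).
by apply: eq_big => [i|i _]; rewrite ?inE // derivXsubC mul1r eps_setE.
Qed.

Lemma dx_fpoly D : is_derivation D -> dx D (fpoly a) = \sum_i (- D (a i)) *: eps a i.
Proof.
move=> hD; rewrite fpoly_setE (derivation_prod (dxM hD)).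
apply: eq_big => [i|i _]; first by rewrite inE.
by rewrite dxXsubC // eps_setE -mul_polyC polyCN.
Qed.

Lemma fpoly_neq0 : fpoly a != 0.
Proof. by apply/prodf_neq0 => j _; rewrite polyXsubC_eq0. Qed.

Lemma fpoly_root k : (fpoly a).[a k] = 0.
Proof. by rewrite horner_prod (bigD1 k) //= hornerXsubC subrr mul0r. Qed.

Lemma size_eps i : size (eps a i) = n.
Proof.
rewrite /eps -big_filter size_prod_XsubC -[filter _ _]/(enum (predC1 i)).
by rewrite -cardE cardC1 card_ord; case: n i => [[]|].
Qed.

Lemma eps_root i k : i != k -> (eps a i).[a k] = 0.
Proof.
by move=> ik; rewrite horner_prod (bigD1 k) 1?eq_sym //= hornerXsubC subrr mul0r.
Qed.

Lemma horner_eps_neq0 k : (eps a k).[a k] != 0.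
Proof.
rewrite horner_prod; apply/prodf_neq0 => j jk.
by rewrite hornerXsubC subr_eq0; apply: contra jk => /eqP /a_inj ->.
Qed.

Lemma horner_eps_sum (s : 'I_n -> K) k :
  (\sum_i s i *: eps a i).[a k] = s k * (eps a k).[a k].
Proof.
rewrite horner_sum (bigD1 k) //= hornerZ big1 ?addr0 // => i ik.
by rewrite hornerZ eps_root ?mulr0.
Qed.

Lemma horner_sum_eps k : (\sum_i eps a i).[a k] = (eps a k).[a k].
Proof.
by rewrite horner_sum (bigD1 k) //= big1 ?addr0 // => i ik; rewrite eps_root.
Qed.

Lemma size_eps_sum (s : 'I_n -> K) : (size (\sum_i s i *: eps a i)%R <= n)%N.
Proof.
apply: leq_trans (size_sum _ _ _) _; apply/bigmax_leqP => i _ /=.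
by rewrite (leq_trans (size_scale_leq _ _)) // size_eps.
Qed.

Lemma eps_sum_unique (s : 'I_n -> K) (p : {poly K}) : (size p <= n)%N ->
  (forall k, p.[a k] = s k * (eps a k).[a k]) -> p = \sum_i s i *: eps a i.
Proof.
move=> sz_p p_at; apply/eqP; rewrite -subr_eq0; apply/eqP.
apply: (@roots_geq_poly_eq0 _ _ [seq a k | k <- enum 'I_n]).
- by apply/allP => _ /mapP[k _ ->]; rewrite /root !hornerE horner_eps_sum p_at subrr.
- by rewrite map_inj_uniq ?enum_uniq.
- rewrite size_map size_enum_ord (leq_trans (size_polyD _ _)) //.
  by rewrite size_polyN geq_max sz_p size_eps_sum.
Qed.

Lemma fpoly_split i : fpoly a = ('X - (a i)%:P) * eps a i.
Proof. by rewrite /fpoly (bigD1 i). Qed.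

Lemma eps_split i j : j != i -> eps a i = ('X - (a j)%:P) * eps2 i j.
Proof. by move=> ji; rewrite /eps (bigD1 j). Qed.

Lemma eps2C i j : eps2 i j = eps2 j i.
Proof. by apply: eq_bigl => k; rewrite andbC. Qed.

Lemma eps_mul i j : j != i -> eps a i * eps a j = eps2 i j * fpoly a.
Proof.
move=> ji; rewrite (eps_split (i := j) (j := i)) 1?eq_sym // eps2C.
by rewrite (fpoly_split i); ring.
Qed.

Lemma eps2_root i j k : k != i -> k != j -> (eps2 i j).[a k] = 0.
Proof.
move=> ki kj; rewrite horner_prod (bigD1 k) /= ?ki ?kj //.
by rewrite hornerXsubC subrr mul0r.
Qed.

Lemma horner_eps2 i j : j != i -> (eps2 i j).[a i] = (eps a i).[a i] / (a i - a j).
Proof.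
move=> ji; have aij : a i - a j != 0.
  by rewrite subr_eq0; apply: contra ji => /eqP /a_inj ->.
by rewrite (eps_split ji) hornerM hornerXsubC [_ * _.[_]]mulrC mulfK.
Qed.

Lemma horner_eps2_sum (c : 'I_n -> 'I_n -> K) k : c k k = 0 ->
  (\sum_i \sum_j c i j *: eps2 i j).[a k] =
  (\sum_(j | j != k) (c k j + c j k) / (a k - a j)) * (eps a k).[a k].
Proof.
move=> ckk; rewrite horner_sum (bigD1 k) //= horner_sum (bigD1 k) //= hornerZ ckk.
rewrite mul0r add0r mulr_suml -big_split /=; apply: eq_bigr => j jk.
rewrite horner_sum (bigD1 k) //= big1 ?addr0 => [|i ik]; last first.
  by rewrite hornerZ eps2_root ?mulr0 // eq_sym.
by rewrite !hornerZ [eps2 j k]eps2C horner_eps2 //; ring.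
Qed.

End LagrangeBasis.

Section DarbouxCofactor.
Variables (K : fieldType) (D : K -> K) (n : nat) (a : 'I_n -> K).
Variables (uc : 'I_n -> K) (v w : {poly K}).
Hypotheses (hD : is_derivation D) (a_inj : injective a).
Local Notation f := (fpoly a).
Local Notation u := (\sum_(i < n) uc i *: eps a i).
Hypothesis equation : u * dx D f + v * f^`() = w * f.

Lemma v_at_root k : v.[a k] = uc k * D (a k) * (eps a k).[a k].
Proof.
have := congr1 (horner^~ (a k)) equation.
rewrite /= deriv_fpoly dx_fpoly // !hornerD !hornerM fpoly_root.
rewrite !horner_eps_sum horner_sum_eps => h.
apply: (mulIf (horner_eps_neq0 a_inj k)); apply/eqP.
by rewrite -subr_eq0 -(mulr0 w.[a k]) -h; apply/eqP; ring.
Qed.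

Lemma v_eps_expansion : (size v <= n)%N -> v = \sum_i (uc i * D (a i)) *: eps a i.
Proof.
by move=> sz_v; apply: (eps_sum_unique a_inj (s := fun i => uc i * D (a i))) v_at_root.
Qed.

Lemma w_eps2_expansion : v = \sum_i (uc i * D (a i)) *: eps a i ->
  w = \sum_i \sum_j (uc i * (D (a i) - D (a j))) *: eps2 a i j.
Proof.
move=> vE; apply: (mulIf (fpoly_neq0 a)).
rewrite -equation vE deriv_fpoly dx_fpoly // !mulr_suml -big_split /=.
apply: eq_bigr => i _; rewrite !mulr_sumr -big_split mulr_suml /=.
apply: eq_bigr => j _; rewrite -scalerAr -!scalerAl scalerA -scalerDl.
have -> : - D (a j) * uc i + uc i * D (a i) = uc i * (D (a i) - D (a j)) by ring.
have [->|ji] := eqVneq j i; first by rewrite subrr mulr0 !scale0r.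
by rewrite eps_mul.
Qed.

Lemma w_at_root k : v = \sum_i (uc i * D (a i)) *: eps a i ->
  w.[a k] = (\sum_(j | j != k) (D (a k) - D (a j)) / (a k - a j) * (uc k - uc j))
            * (eps a k).[a k].
Proof.
move=> vE; rewrite (w_eps2_expansion vE) horner_eps2_sum ?subrr ?mulr0 //.
by congr (_ * _); apply: eq_bigr => j _; ring.
Qed.

End DarbouxCofactor.

Theorem mainTheorem16 (K : fieldType) (D : K -> K) (hD : is_derivation D)
  (n : nat) (hn : (2 <= n)%N) (a : 'I_n -> K) (ha : injective a)
  (wc : 'I_n -> K) (hw : \sum_(i < n) wc i = 0)
  (uc : 'I_n -> K) (v : {poly K}) (hv : (size v <= n)%N) :
  let f := fpoly a in
  let u := \sum_(i < n) uc i *: eps a i in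
  let w := \sum_(i < n) wc i *: eps a i in
  u * dx D f + v * f^`() = w * f ->
  v = \sum_(i < n) (uc i * D (a i)) *: eps a i /\
  (forall i : 'I_n,
     wc i = (\sum_(j < n | j != i) (D (a i) - D (a j)) / (a i - a j)) * uc i
            - \sum_(j < n | j != i) (D (a i) - D (a j)) / (a i - a j) * uc j).
Proof.
move=> f u w equation.
have vE := v_eps_expansion hD ha equation hv.
split=> // k; apply: (mulIf (horner_eps_neq0 ha k)).
have := w_at_root hD ha equation k vE; rewrite horner_eps_sum => ->.
congr (_ * _); rewrite mulr_suml -sumrB; apply: eq_bigr => j _; ring.
Qed.
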